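(* For $n\geq0$ let $T_n$ be the total number of lattice points lying on the $x$-axis, summed over all symmetric Dyck paths of length $2n$, and let $d_n$ be the number of such paths. Let $C(x)=\frac{1-\sqrt{1-4x}}{2x}$, $B(x)=\frac{1}{\sqrt{1-4x}}$, and $C_m=\frac{1}{m+1}\binom{2m}{m}$. Then $$\sum_{n\geq0}T_nx^n=2\,C(x^2)\cdot\frac{1}{2x}\left(\sqrt{\frac{1+2x}{1-2x}}-1\right)-C(x^2)=1+2x+5x^2+8x^3+18x^4+30x^5+65x^6+112x^7+\cdots.$$ Moreover: $\sum_{m\geq0}T_{2m}x^{2m}=C(x^2)\left[2B(x^2)-1\right]$ and the average number of points on the $x$-axis for $n=2m$ is $\frac{T_{2m}}{d_{2m}}=\frac{\binom{2m+2}{m+1}-C_m}{\binom{2m}{m}}=\frac{4m+1}{m+1}\to4$; and $\sum_{m\geq0}T_{2m+1}x^{2m+1}=2xB(x^2)C(x^2)^2$ and for $n=2m+1$ the average is $\frac{T_{2m+1}}{d_{2m+1}}=\frac{2\binom{2m+2}{m}}{\binom{2m+1}{m}}=\frac{4(m+1)}{m+2}\to4$ as $m\to\infty$.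
   Context: A Dyck path of length $2n$ is a lattice path from $(0,0)$ to $(2n,0)$ with steps $U=(1,1)$, $D=(1,-1)$ never going below the $x$-axis. It is symmetric if it is invariant under reflection in the line $x=n$ (its $i$-th step is $U$ iff its $(2n+1-i)$-th step is $D$). The points on the $x$-axis of a path are its vertices with $y$-coordinate $0$, including both endpoints. *)

From Stdlib Require Import Reals ZArith Arith List Bool.
From Coquelicot Require Import Coquelicot.
Import ListNotations.
Open Scope R_scope.

(* A path is a word over {U,D}; true = U = (1,1), false = D = (1,-1). *)
Fixpoint words (k : nat) : list (list bool) :=
  match k with
  | O => [[]]
  | S k' => flat_map (fun w => [true :: w; false :: w]) (words k')
  end.

Fixpoint heights (h : Z) (p : list bool) : list Z :=
  match p with
  | [] => []
  | b :: p' => let h' := (if b then h + 1 else h - 1)%Z in h' :: heights h' p'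
  end.

Definition vertex_heights (p : list bool) : list Z := 0%Z :: heights 0 p.

Definition is_dyck (p : list bool) : bool :=
  forallb (fun h => Z.leb 0 h) (vertex_heights p) &&
  Z.eqb (last (vertex_heights p) 0%Z) 0.

(* symmetric path of length 2n: the i-th step (1-based) is U iff the
   (2n+1-i)-th step is D; with 0-based index j: p_j = negb p_(2n-1-j). *)
Definition is_symmetric (n : nat) (p : list bool) : bool :=
  Nat.eqb (length p) (2 * n) &&
  forallb (fun j => Bool.eqb (nth j p false) (negb (nth (2 * n - 1 - j) p false)))
          (seq 0 (2 * n)).

Definition sym_dyck (n : nat) : list (list bool) :=
  filter (fun p => is_dyck p && is_symmetric n p) (words (2 * n)).

Definition axis_points (p : list bool) : nat :=
  count_occ Z.eq_dec (vertex_heights p) 0%Z.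

Definition d (n : nat) : nat := length (sym_dyck n).
Definition T (n : nat) : nat := fold_right Nat.add 0%nat (map axis_points (sym_dyck n)).

Fixpoint binom (n k : nat) : nat :=
  match n, k with
  | _, O => 1%nat
  | O, S _ => 0%nat
  | S n', S k' => (binom n' k' + binom n' k)%nat
  end.

Definition catalan (m : nat) : R := INR (binom (2 * m) m) / (INR m + 1).

Definition Cgf (y : R) : R := (1 - sqrt (1 - 4 * y)) / (2 * y).
Definition Bgf (y : R) : R := 1 / sqrt (1 - 4 * y).

From Stdlib Require Import Reals ZArith Arith List Bool Lia Lra.
From Coquelicot Require Import Coquelicot.
Import ListNotations.

(** A symmetric Dyck path of length [2n] is [w ++ mirror w] for a unique
    nonnegative path [w] of length [n], and its axis points are twice the
    zeros of [w], less one if [w] ends on the axis.  Sorting nonnegative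
    paths by final height, the reflection principle writes their numbers as
    differences of binomial coefficients, and the zeros of the paths ending
    at height [h] are counted by the paths of length [n+1] ending at [h+1];
    this gives [T_n] and [d_n] as explicit binomial coefficients.  The
    generating functions then reduce to that of the central binomial
    coefficients, [1/sqrt(1-4y)], obtained from the differential equation
    [(1-4y) f' = 2 f]. *)

Open Scope nat_scope.

Definition sum_over {A} (L : list A) (g : A -> nat) : nat := list_sum (map g L).

Lemma sum_over_ext_in {A} (L : list A) f g :
  (forall x, In x L -> f x = g x) -> sum_over L f = sum_over L g.
Proof.
  intro H. unfold sum_over. f_equal. apply map_ext_in. exact H.
Qed.

Lemma sum_over_add {A} (L : list A) f g :
  sum_over L (fun x => f x + g x) = sum_over L f + sum_over L g.
Proof. induction L as [|a L IH]; unfold sum_over in *; simpl; [lia|rewrite IH; lia]. Qed.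

Lemma sum_over_mul {A} (L : list A) c f :
  sum_over L (fun x => c * f x) = c * sum_over L f.
Proof. induction L as [|a L IH]; unfold sum_over in *; simpl; [lia|rewrite IH; lia]. Qed.

Lemma sum_over_const0 {A} (L : list A) : sum_over L (fun _ => 0) = 0.
Proof. induction L as [|a L IH]; unfold sum_over in *; simpl; auto. Qed.

Lemma sum_over_filter {A} (L : list A) c f :
  sum_over (filter c L) f = sum_over L (fun x => if c x then f x else 0).
Proof.
  induction L as [|a L IH]; unfold sum_over in *; simpl; auto.
  destruct (c a); simpl; rewrite IH; auto.
Qed.

Lemma sum_words_cons k g :
  sum_over (words (S k)) g = sum_over (words k) (fun w => g (true :: w) + g (false :: w)).
Proof.
  unfold sum_over. simpl. induction (words k) as [|w l IH]; simpl; auto. rewrite IH; lia.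
Qed.

Lemma sum_words_app a b g :
  sum_over (words (a + b)) g
  = sum_over (words a) (fun w1 => sum_over (words b) (fun w2 => g (w1 ++ w2))).
Proof.
  revert g; induction a as [|a IH]; intro g.
  - unfold sum_over at 2. simpl. symmetry. apply Nat.add_0_r.
  - change (S a + b) with (S (a + b)). rewrite sum_words_cons, IH, sum_words_cons.
    apply sum_over_ext_in. intros w _. rewrite <- sum_over_add. reflexivity.
Qed.

Lemma sum_words_snoc k g :
  sum_over (words (S k)) g = sum_over (words k) (fun w => g (w ++ [true]) + g (w ++ [false])).
Proof.
  replace (S k) with (k + 1) by lia. rewrite sum_words_app.
  apply sum_over_ext_in. intros w _. unfold sum_over. simpl. lia.
Qed.

Lemma length_words k w : In w (words k) -> length w = k.
Proof.
  revert w; induction k as [|k IH]; simpl; intros w H.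
  - destruct H as [<-|[]]; auto.
  - apply in_flat_map in H. destruct H as [v [Hv Hw]].
    destruct Hw as [<-|[<-|[]]]; simpl; f_equal; auto.
Qed.

Lemma sum_words_indicator k v c : length v = k ->
  sum_over (words k) (fun w => if list_eq_dec bool_dec w v then c else 0) = c.
Proof.
  revert v; induction k as [|k IH]; intros v Hv.
  - destruct v; [|discriminate]. unfold sum_over. simpl.
    destruct (list_eq_dec bool_dec [] []); [lia|congruence].
  - destruct v as [|b v]; [discriminate|]. injection Hv as Hv.
    rewrite sum_words_cons. etransitivity; [|exact (IH v Hv)].
    apply sum_over_ext_in. intros w _.
    destruct (list_eq_dec bool_dec w v) as [->|Hne], b;
      repeat destruct (list_eq_dec bool_dec _ _); congruence || lia.
Qed.

Definition step (h : Z) (b : bool) : Z := if b then (h + 1)%Z else (h - 1)%Z.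

Fixpoint final_height (h : Z) (p : list bool) : Z :=
  match p with [] => h | b :: p' => final_height (step h b) p' end.

Definition vertices (h : Z) (p : list bool) : list Z := h :: heights h p.

(* [w ++ mirror w] is the symmetric path with first half [w]. *)
Definition mirror (w : list bool) : list bool := rev (map negb w).

Definition nonneg (w : list bool) : bool := forallb (fun h => Z.leb 0 h) (vertices 0 w).
Definition zeros (w : list bool) : nat := count_occ Z.eq_dec (vertices 0 w) 0%Z.

Lemma final_height_app h a b : final_height h (a ++ b) = final_height (final_height h a) b.
Proof. revert h; induction a as [|x a IH]; intro h; simpl; auto. Qed.

Lemma vertices_app h a b :
  vertices h (a ++ b) = vertices h a ++ heights (final_height h a) b.
Proof.
  unfold vertices. f_equal.
  revert h; induction a as [|x a IH]; intro h; simpl; auto. rewrite IH. reflexivity.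
Qed.

Lemma final_height_mirror h w : final_height (final_height h w) (mirror w) = h.
Proof.
  revert h; induction w as [|b w IH]; intro h; simpl; auto.
  unfold mirror; simpl. rewrite final_height_app. fold (mirror w). rewrite IH.
  destruct b; simpl; lia.
Qed.

Lemma vertices_mirror h w : vertices (final_height h w) (mirror w) = rev (vertices h w).
Proof.
  revert h; induction w as [|b w IH]; intro h; simpl; auto.
  unfold mirror; simpl. fold (mirror w). rewrite vertices_app, IH, final_height_mirror.
  unfold vertices. simpl. unfold step. do 2 f_equal. destruct b; simpl; f_equal; lia.
Qed.

Lemma vertices_cat_mirror w :
  vertices 0 (w ++ mirror w) = vertices 0 w ++ tl (rev (vertices 0 w)).
Proof. rewrite vertices_app, <- vertices_mirror. reflexivity. Qed.

Lemma last_vertices h p d : last (vertices h p) d = final_height h p.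
Proof.
  revert h; induction p as [|b p IH]; intro h; [reflexivity|].
  change (last (h :: vertices (step h b) p) d = final_height (step h b) p).
  rewrite <- IH. reflexivity.
Qed.

Lemma final_height_in_vertices h p : In (final_height h p) (vertices h p).
Proof. revert h; induction p as [|b p IH]; intro h; [left|right; apply IH]; reflexivity. Qed.

Lemma nonneg_final_height w : nonneg w = true -> (0 <= final_height 0 w)%Z.
Proof.
  unfold nonneg. rewrite forallb_forall. intro H. apply Z.leb_le, H.
  apply final_height_in_vertices.
Qed.

Lemma length_mirror w : length (mirror w) = length w.
Proof. unfold mirror. rewrite length_rev, length_map. reflexivity. Qed.

Lemma nth_mirror w k : k < length w ->
  nth k (mirror w) false = negb (nth (length w - 1 - k) w false).
Proof.
  intro Hk. unfold mirror. rewrite rev_nth by (rewrite length_map; lia).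
  rewrite length_map, nth_indep with (d' := negb false) by (rewrite length_map; lia).
  rewrite map_nth. do 2 f_equal. lia.
Qed.

(** * Symmetric Dyck paths as mirrored nonnegative paths *)

Lemma is_dyck_cat_mirror w : is_dyck (w ++ mirror w) = nonneg w.
Proof.
  unfold is_dyck. change (vertex_heights (w ++ mirror w)) with (vertices 0 (w ++ mirror w)).
  rewrite last_vertices, final_height_app, final_height_mirror, Z.eqb_refl, andb_true_r.
  rewrite vertices_cat_mirror, forallb_app. unfold nonneg.
  destruct (forallb _ (vertices 0 w)) eqn:E; [|reflexivity].
  apply andb_true_intro. split; [reflexivity|].
  rewrite forallb_forall in *. intros x Hx. apply E, in_rev.
  destruct (rev (vertices 0 w)); [destruct Hx|now right].
Qed.

Lemma is_symmetric_cat_mirror n w : length w = n -> is_symmetric n (w ++ mirror w) = true.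
Proof.
  intro Hl. unfold is_symmetric. apply andb_true_intro. split.
  - apply Nat.eqb_eq. rewrite length_app, length_mirror. lia.
  - apply forallb_forall. intros j Hj. apply in_seq in Hj. apply eqb_true_iff.
    destruct (Nat.lt_ge_cases j n).
    + rewrite app_nth1, app_nth2, nth_mirror, negb_involutive by lia.
      f_equal. lia.
    + rewrite app_nth2, app_nth1, nth_mirror by lia. do 2 f_equal. lia.
Qed.

Lemma symmetric_cat_mirror n w1 w2 : length w1 = n -> length w2 = n ->
  is_symmetric n (w1 ++ w2) = true -> w2 = mirror w1.
Proof.
  intros H1 H2 Hs. apply andb_prop in Hs as [_ Hs]. rewrite forallb_forall in Hs.
  apply nth_ext with (d := false) (d' := false); [rewrite length_mirror; lia|].
  intros k Hk. specialize (Hs (n + k) (proj2 (in_seq (2 * n) 0 (n + k)) ltac:(lia))).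
  apply eqb_prop in Hs. rewrite app_nth2, app_nth1 in Hs by lia.
  replace (n + k - length w1) with k in Hs by lia.
  rewrite Hs, nth_mirror by lia. do 2 f_equal. lia.
Qed.

Lemma sum_sym_dyck n (f : list bool -> nat) :
  sum_over (sym_dyck n) f
  = sum_over (words n) (fun w => if nonneg w then f (w ++ mirror w) else 0).
Proof.
  unfold sym_dyck. rewrite sum_over_filter. replace (2 * n) with (n + n) by lia.
  rewrite sum_words_app. apply sum_over_ext_in. intros w1 Hw1. apply length_words in Hw1.
  rewrite <- (sum_words_indicator n (mirror w1) (if nonneg w1 then f (w1 ++ mirror w1) else 0))
    by (rewrite length_mirror; exact Hw1).
  apply sum_over_ext_in. intros w2 Hw2. apply length_words in Hw2.
  destruct (list_eq_dec bool_dec w2 (mirror w1)) as [->|Hne].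
  - rewrite is_dyck_cat_mirror, is_symmetric_cat_mirror, andb_true_r by exact Hw1.
    reflexivity.
  - destruct (is_symmetric n (w1 ++ w2)) eqn:E; [|now rewrite andb_false_r].
    exfalso. apply Hne. eapply symmetric_cat_mirror; eauto.
Qed.

Lemma axis_points_cat_mirror w :
  axis_points (w ++ mirror w) + (if Z.eq_dec (final_height 0 w) 0 then 1 else 0)
  = 2 * zeros w.
Proof.
  unfold axis_points. change (vertex_heights (w ++ mirror w)) with (vertices 0 (w ++ mirror w)).
  rewrite vertices_cat_mirror, count_occ_app. unfold zeros.
  rewrite <- (count_occ_rev Z.eq_dec (vertices 0 w)), <- vertices_mirror.
  unfold vertices at 2 3. simpl. destruct (Z.eq_dec (final_height 0 w) 0); lia.
Qed.

Lemma T_prefix_sum n :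
  T n = sum_over (words n) (fun w => if nonneg w then axis_points (w ++ mirror w) else 0).
Proof. exact (sum_sym_dyck n axis_points). Qed.

Lemma d_prefix_sum n : d n = sum_over (words n) (fun w => if nonneg w then 1 else 0).
Proof.
  rewrite <- (sum_sym_dyck n (fun _ => 1)). unfold d, sum_over.
  induction (sym_dyck n) as [|p l IH]; simpl; lia.
Qed.

(** * Nonnegative paths by final height *)

Definition ballot (n : nat) (h : Z) : nat :=
  sum_over (words n) (fun w => if nonneg w && Z.eqb (final_height 0 w) h then 1 else 0).

Definition ballot_zeros (n : nat) (h : Z) : nat :=
  sum_over (words n) (fun w => if nonneg w && Z.eqb (final_height 0 w) h then zeros w else 0).

Definition prefix_zeros (n : nat) : nat :=
  sum_over (words n) (fun w => if nonneg w then zeros w else 0).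

Lemma nonneg_snoc w b : nonneg (w ++ [b]) = nonneg w && Z.leb 0 (step (final_height 0 w) b).
Proof.
  unfold nonneg. rewrite vertices_app, forallb_app. simpl. rewrite andb_true_r. reflexivity.
Qed.

Lemma final_height_snoc w b : final_height 0 (w ++ [b]) = step (final_height 0 w) b.
Proof. rewrite final_height_app. reflexivity. Qed.

Lemma zeros_snoc w b :
  zeros (w ++ [b]) = zeros w + (if Z.eq_dec (step (final_height 0 w) b) 0 then 1 else 0).
Proof.
  unfold zeros. rewrite vertices_app, count_occ_app. simpl. destruct (Z.eq_dec _ _); lia.
Qed.

Ltac case_last_step w :=
  rewrite ?nonneg_snoc, ?final_height_snoc, ?zeros_snoc;
  let z := fresh "z" in remember (zeros w) as z;
  let G := fresh "G" in
  destruct (nonneg w) eqn:G; simpl; [pose proof (nonneg_final_height w G)|];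
  unfold step;
  repeat (match goal with
          | |- context [Z.eqb ?a ?b] => destruct (Z.eqb_spec a b)
          | |- context [Z.leb ?a ?b] => destruct (Z.leb_spec a b)
          | |- context [Z.eq_dec ?a ?b] => destruct (Z.eq_dec a b)
          end; simpl);
  lia.

Lemma ballot_succ n h : (-1 <= h)%Z -> ballot (S n) (h + 1) = ballot n h + ballot n (h + 2).
Proof.
  intro Hh. unfold ballot. rewrite sum_words_snoc, <- sum_over_add.
  apply sum_over_ext_in. intros w _. case_last_step w.
Qed.

Lemma ballot_zeros_succ n h : (-1 <= h)%Z ->
  ballot_zeros (S n) (h + 1)
  = ballot_zeros n h + ballot_zeros n (h + 2)
    + (if Z.eq_dec (h + 1) 0 then ballot (S n) 0 else 0).
Proof.
  intro Hh. unfold ballot_zeros. destruct (Z.eq_dec (h + 1) 0) as [E|E].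
  - unfold ballot. rewrite !sum_words_snoc, <- !sum_over_add.
    apply sum_over_ext_in. intros w _. case_last_step w.
  - rewrite sum_words_snoc, <- sum_over_add, Nat.add_0_r.
    apply sum_over_ext_in. intros w _. case_last_step w.
Qed.

Lemma d_succ n : d (S n) + ballot n 0 = 2 * d n.
Proof.
  rewrite !d_prefix_sum. unfold ballot.
  rewrite sum_words_snoc, <- sum_over_mul, <- sum_over_add.
  apply sum_over_ext_in. intros w _. case_last_step w.
Qed.

Lemma prefix_zeros_succ n : prefix_zeros (S n) + ballot_zeros n 0 = 2 * prefix_zeros n + ballot n 1.
Proof.
  unfold prefix_zeros, ballot_zeros, ballot.
  rewrite sum_words_snoc, <- sum_over_mul, <- !sum_over_add.
  apply sum_over_ext_in. intros w _. case_last_step w.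
Qed.

Lemma T_prefix_zeros n : T n + ballot n 0 = 2 * prefix_zeros n.
Proof.
  rewrite T_prefix_sum. unfold prefix_zeros, ballot.
  rewrite <- sum_over_mul, <- sum_over_add. apply sum_over_ext_in. intros w _.
  pose proof (axis_points_cat_mirror w).
  destruct (nonneg w); cbn [andb]; [|lia].
  destruct (Z.eqb_spec (final_height 0 w) 0), (Z.eq_dec (final_height 0 w) 0); lia.
Qed.

Lemma ballot_neg n h : (h < 0)%Z -> ballot n h = 0.
Proof.
  intro Hh. unfold ballot. transitivity (sum_over (words n) (fun _ => 0)); [|apply sum_over_const0].
  apply sum_over_ext_in. intros w _. destruct (nonneg w) eqn:G; [|reflexivity].
  pose proof (nonneg_final_height w G). destruct (Z.eqb_spec (final_height 0 w) h); simpl; lia.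
Qed.

Lemma ballot_zeros_neg n h : (h < 0)%Z -> ballot_zeros n h = 0.
Proof.
  intro Hh. unfold ballot_zeros. transitivity (sum_over (words n) (fun _ => 0)); [|apply sum_over_const0].
  apply sum_over_ext_in. intros w _. destruct (nonneg w) eqn:G; [|reflexivity].
  pose proof (nonneg_final_height w G). destruct (Z.eqb_spec (final_height 0 w) h); simpl; lia.
Qed.

Lemma ballot_0 h : ballot 0 h = if Z.eqb 0 h then 1 else 0.
Proof. destruct h; reflexivity. Qed.

Lemma ballot_zeros_0 h : ballot_zeros 0 h = if Z.eqb 0 h then 1 else 0.
Proof. destruct h; reflexivity. Qed.

(** * Reflection principle *)

Open Scope Z_scope.

Fixpoint walks (n : nat) (h : Z) : Z :=
  match n with
  | O => if Z.eqb h 0 then 1 else 0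
  | S n' => walks n' (h - 1) + walks n' (h + 1)
  end.

Lemma walks_opp n h : walks n (- h) = walks n h.
Proof.
  revert h; induction n as [|n IH]; intro h; simpl.
  - destruct (Z.eqb_spec (- h) 0), (Z.eqb_spec h 0); lia.
  - replace (- h - 1) with (- (h + 1)) by lia. replace (- h + 1) with (- (h - 1)) by lia.
    rewrite !IH. lia.
Qed.

Lemma walks_gt n h : Z.of_nat n < h -> walks n h = 0.
Proof.
  revert h; induction n as [|n IH]; intros h Hh; simpl.
  - destruct (Z.eqb_spec h 0); lia.
  - rewrite !IH by lia. reflexivity.
Qed.

Lemma walks_odd n h j : Z.of_nat n + h = 2 * j + 1 -> walks n h = 0.
Proof.
  revert h j; induction n as [|n IH]; intros h j Hh; simpl.
  - destruct (Z.eqb_spec h 0); lia.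
  - rewrite (IH (h - 1) (j - 1)), (IH (h + 1) j) by lia. reflexivity.
Qed.

Lemma walks_binom n k h : h = Z.of_nat n - 2 * Z.of_nat k -> walks n h = Z.of_nat (binom n k).
Proof.
  intros ->. revert k; induction n as [|n IH]; intro k.
  - destruct k; [reflexivity|]. simpl. destruct (Z.eqb_spec (- Z.of_nat (S k) * 2) 0); [lia|].
    reflexivity.
  - cbn [walks]. destruct k as [|k].
    + replace (Z.of_nat (S n) - 2 * Z.of_nat 0 - 1) with (Z.of_nat n - 2 * Z.of_nat 0) by lia.
      rewrite IH, walks_gt by lia. destruct n; reflexivity.
    + replace (Z.of_nat (S n) - 2 * Z.of_nat (S k) - 1) with (Z.of_nat n - 2 * Z.of_nat (S k)) by lia.
      replace (Z.of_nat (S n) - 2 * Z.of_nat (S k) + 1) with (Z.of_nat n - 2 * Z.of_nat k) by lia.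
      rewrite !IH. cbn [binom]. lia.
Qed.

Lemma ballot_reflection n h : 0 <= h -> Z.of_nat (ballot n h) = walks n h - walks n (h + 2).
Proof.
  revert h; induction n as [|n IH]; intros h Hh.
  - rewrite ballot_0. cbn [walks].
    destruct (Z.eqb_spec 0 h), (Z.eqb_spec h 0), (Z.eqb_spec (h + 2) 0); lia.
  - replace h with ((h - 1) + 1) at 1 by lia. rewrite ballot_succ, Nat2Z.inj_add by lia.
    cbn [walks]. replace (h - 1 + 2) with (h + 1) by lia. replace (h + 2 - 1) with (h + 1) by lia.
    destruct (Z.eq_dec h 0) as [->|Hne].
    + rewrite ballot_neg, IH by lia. pose proof (walks_opp n 1). simpl in *. lia.
    + rewrite !IH by lia.
      replace (h - 1 + 2) with (h + 1) by lia. replace (h + 1 + 2) with (h + 2 + 1) by lia. lia.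
Qed.

(* Both sides satisfy the same recursion in [n]. *)
Lemma ballot_zeros_ballot n h : 0 <= h -> ballot_zeros n h = ballot (S n) (h + 1).
Proof.
  revert h; induction n as [|n IH]; intros h Hh.
  - rewrite ballot_zeros_0, ballot_succ, !ballot_0 by lia.
    destruct (Z.eqb_spec 0 h), (Z.eqb_spec 0 (h + 2)); lia.
  - replace h with ((h - 1) + 1) at 1 by lia. rewrite ballot_zeros_succ by lia.
    pose proof (ballot_succ (S n) h ltac:(lia)) as R.
    destruct (Z.eq_dec (h - 1 + 1) 0) as [E|E].
    + assert (h = 0) by lia. subst h.
      pose proof (IH 1 ltac:(lia)). rewrite (ballot_zeros_neg n (0 - 1)) by lia.
      simpl in *. lia.
    + replace (h - 1 + 2) with (h + 1) by lia.
      rewrite (IH (h - 1)), (IH (h + 1)) by lia.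
      replace (h - 1 + 1) with h in * by lia. replace (h + 1 + 1) with (h + 2) by lia. lia.
Qed.

Lemma d_walks n : Z.of_nat (d n) = walks n 0 + walks n 1.
Proof.
  induction n as [|n IH]; [reflexivity|].
  pose proof (d_succ n) as R. pose proof (ballot_reflection n 0 ltac:(lia)) as B.
  pose proof (walks_opp n 1) as W. cbn [walks]. simpl in *. lia.
Qed.

Lemma prefix_zeros_d n : (prefix_zeros n + ballot (S n) 0 = d (S n))%nat.
Proof.
  induction n as [|n IH]; [reflexivity|].
  pose proof (prefix_zeros_succ n) as R1. pose proof (ballot_zeros_ballot n 0 ltac:(lia)) as R2.
  pose proof (d_succ (S n)) as R3.
  pose proof (ballot_succ (S n) (-1) ltac:(lia)) as R4.
  pose proof (ballot_succ n (-1) ltac:(lia)) as R5.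
  rewrite (ballot_neg (S n) (-1)) in R4 by lia. rewrite (ballot_neg n (-1)) in R5 by lia.
  simpl in *. lia.
Qed.

Lemma d_even m : d (2 * m) = binom (2 * m) m.
Proof.
  pose proof (d_walks (2 * m)) as D.
  rewrite (walks_odd _ 1 (Z.of_nat m)), (walks_binom (2 * m) m 0) in D by lia. lia.
Qed.

Lemma d_odd m : d (2 * m + 1) = binom (2 * m + 1) m.
Proof.
  pose proof (d_walks (2 * m + 1)) as D.
  rewrite (walks_odd _ 0 (Z.of_nat m)), (walks_binom (2 * m + 1) m 1) in D by lia. lia.
Qed.

Lemma T_even m :
  (T (2 * m) + binom (2 * m) m = 2 * binom (2 * m + 1) m + binom (2 * m) (m + 1))%nat.
Proof.
  pose proof (T_prefix_zeros (2 * m)) as R1. pose proof (prefix_zeros_d (2 * m)) as R2.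
  pose proof (ballot_reflection (S (2 * m)) 0 ltac:(lia)) as R3.
  pose proof (d_walks (S (2 * m))) as R4.
  pose proof (ballot_reflection (2 * m) 0 ltac:(lia)) as R5.
  rewrite (walks_odd (S (2 * m)) 0 (Z.of_nat m)) in R3, R4 by lia.
  rewrite (walks_odd (S (2 * m)) (0 + 2) (Z.of_nat m + 1)) in R3 by lia.
  rewrite (walks_binom (S (2 * m)) m 1) in R4 by lia.
  rewrite (walks_binom (2 * m) m 0) in R5 by lia.
  rewrite <- (walks_opp _ (0 + 2)), (walks_binom (2 * m) (m + 1) (- (0 + 2))) in R5 by lia.
  replace (S (2 * m)) with (2 * m + 1)%nat in * by lia. lia.
Qed.

Lemma T_odd m : T (2 * m + 1) = (2 * binom (2 * m + 2) m)%nat.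
Proof.
  pose proof (T_prefix_zeros (2 * m + 1)) as R1. pose proof (prefix_zeros_d (2 * m + 1)) as R2.
  pose proof (ballot_reflection (2 * m + 1) 0 ltac:(lia)) as R3.
  pose proof (d_walks (S (2 * m + 1))) as R4.
  pose proof (ballot_reflection (S (2 * m + 1)) 0 ltac:(lia)) as R5.
  rewrite (walks_odd (2 * m + 1) 0 (Z.of_nat m)) in R3 by lia.
  rewrite (walks_odd (2 * m + 1) (0 + 2) (Z.of_nat m + 1)) in R3 by lia.
  rewrite (walks_odd (S (2 * m + 1)) 1 (Z.of_nat m + 1)) in R4 by lia.
  rewrite (walks_binom (S (2 * m + 1)) (m + 1) 0) in R4, R5 by lia.
  rewrite (walks_binom (S (2 * m + 1)) m (0 + 2)) in R5 by lia.
  replace (S (2 * m + 1)) with (2 * m + 2)%nat in * by lia. lia.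
Qed.

Lemma T_first_values :
  (T 0 = 1 /\ T 1 = 2 /\ T 2 = 5 /\ T 3 = 8 /\ T 4 = 18 /\ T 5 = 30 /\
   T 6 = 65 /\ T 7 = 112)%nat.
Proof. vm_compute. repeat split. Qed.

Open Scope nat_scope.

Definition central_binom (m : nat) : nat := binom (2 * m) m.

Lemma binom_0_r n : binom n 0 = 1.
Proof. destruct n; reflexivity. Qed.

Lemma binom_1_r n : binom n 1 = n.
Proof. induction n as [|n IH]; simpl; auto. rewrite binom_0_r, IH. lia. Qed.

Lemma binom_pos n k : k <= n -> 0 < binom n k.
Proof.
  revert k; induction n as [|n IH]; intros k Hk; destruct k as [|k]; simpl; try lia.
  specialize (IH k ltac:(lia)). lia.
Qed.

Lemma binom_absorb n k : S k * binom (S n) (S k) = S n * binom n k.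
Proof.
  revert k; induction n as [|n IH]; intro k.
  - destruct k as [|k]; simpl; lia.
  - destruct k as [|k].
    + change (binom (S (S n)) 1) with (binom (S n) 0 + binom (S n) 1).
      rewrite !binom_0_r, binom_1_r. lia.
    + change (binom (S (S n)) (S (S k))) with (binom (S n) (S k) + binom (S n) (S (S k))).
      pose proof (IH k) as H1. pose proof (IH (S k)) as H2.
      change (binom (S n) (S k)) with (binom n k + binom n (S k)) in *. nia.
Qed.

Lemma binom_absorb_sub n k : k <= n -> S k * binom n (S k) = (n - k) * binom n k.
Proof.
  intro Hk. pose proof (binom_absorb n k) as H.
  change (binom (S n) (S k)) with (binom n k + binom n (S k)) in H.
  replace n with (k + (n - k)) in H at 3 by lia. nia.
Qed.

Lemma binom_odd_middle m : binom (2 * m + 1) (m + 1) = binom (2 * m + 1) m.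
Proof.
  pose proof (binom_absorb_sub (2 * m + 1) m ltac:(lia)) as H.
  replace (2 * m + 1 - m) with (S m) in H by lia. rewrite (Nat.add_1_r m).
  exact (proj1 (Nat.mul_cancel_l _ _ (S m) ltac:(lia)) H).
Qed.

Lemma central_binom_succ_half m : central_binom (S m) = 2 * binom (2 * m + 1) m.
Proof.
  unfold central_binom. replace (2 * S m) with (S (2 * m + 1)) by lia.
  cbn [binom]. pose proof (binom_odd_middle m) as H.
  replace (m + 1) with (S m) in H by lia. lia.
Qed.

Lemma binom_odd_pascal m : binom (2 * m + 1) m = central_binom m + binom (2 * m) (m + 1).
Proof.
  rewrite <- binom_odd_middle, !Nat.add_1_r. reflexivity.
Qed.

Lemma binom_central_right m : (m + 1) * binom (2 * m) (m + 1) = m * central_binom m.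
Proof.
  pose proof (binom_absorb_sub (2 * m) m ltac:(lia)) as H.
  rewrite Nat.add_1_r. unfold central_binom. replace (2 * m - m) with m in H by lia. lia.
Qed.

Lemma central_binom_succ m : (m + 1) * central_binom (S m) = 2 * (2 * m + 1) * central_binom m.
Proof.
  rewrite central_binom_succ_half, binom_odd_pascal.
  pose proof (binom_central_right m). nia.
Qed.

Lemma central_binom_succ_left m :
  (m + 1) * central_binom (S m) = (m + 2) * binom (2 * m + 2) m.
Proof.
  pose proof (binom_absorb_sub (2 * m + 2) m ltac:(lia)) as H.
  replace (2 * m + 2 - m) with (S (S m)) in H by lia.
  unfold central_binom. replace (2 * S m) with (2 * m + 2) by lia. rewrite Nat.add_1_r. lia.
Qed.

Lemma central_binom_pos m : 0 < central_binom m.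
Proof. apply binom_pos. lia. Qed.

Lemma T_even_central m : (m + 1) * T (2 * m) = (4 * m + 1) * central_binom m.
Proof.
  pose proof (T_even m) as H. fold (central_binom m) in H.
  rewrite binom_odd_pascal in H. pose proof (binom_central_right m). nia.
Qed.

Lemma T_odd_central m : (m + 2) * T (2 * m + 1) = 4 * (m + 1) * binom (2 * m + 1) m.
Proof.
  rewrite T_odd. pose proof (central_binom_succ_left m). rewrite central_binom_succ_half in *.
  nia.
Qed.

Lemma T_even_coeff m : 2 * T (2 * m) + 4 * central_binom m = 3 * central_binom (S m).
Proof.
  apply (Nat.mul_cancel_l _ _ (m + 1)); [lia|].
  pose proof (T_even_central m). pose proof (central_binom_succ m). nia.
Qed.

Lemma T_odd_coeff m : T (2 * m + 1) + 2 * central_binom (S m) = central_binom (S (S m)).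
Proof.
  apply (Nat.mul_cancel_l _ _ (m + 2)); [lia|].
  pose proof (central_binom_succ (S m)). pose proof (central_binom_succ_left m).
  rewrite T_odd. replace (S m + 1) with (m + 2) in * by lia. nia.
Qed.

Open Scope R_scope.

Ltac nat_eq_to_R H :=
  apply (f_equal INR) in H;
  repeat first [rewrite mult_INR in H | rewrite plus_INR in H
               | rewrite S_INR in H | rewrite INR_0 in H].

Lemma Rdiv_eq_cross a b c e : b <> 0 -> e <> 0 -> a * e = c * b -> a / b = c / e.
Proof.
  intros Hb He H. replace (a / b) with (a * e / (b * e)) by (field; auto).
  rewrite H. field. auto.
Qed.

Definition central_binomR (m : nat) : R := INR (central_binom m).

Lemma central_binomR_pos m : 0 < central_binomR m.
Proof. apply lt_0_INR, central_binom_pos. Qed.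

Lemma central_binomR_succ m :
  (INR m + 1) * central_binomR (S m) = 2 * (2 * INR m + 1) * central_binomR m.
Proof.
  pose proof (central_binom_succ m) as H. nat_eq_to_R H.
  unfold central_binomR. lra.
Qed.

Lemma T_even_ratio m :
  INR (T (2 * m)) / INR (d (2 * m)) = (4 * INR m + 1) / (INR m + 1).
Proof.
  pose proof (T_even_central m) as H. nat_eq_to_R H.
  rewrite d_even. fold (central_binom m). pose proof (central_binomR_pos m).
  pose proof (pos_INR m). unfold central_binomR in *.
  apply Rdiv_eq_cross; lra.
Qed.

Lemma T_even_ratio_binom m :
  INR (T (2 * m)) / INR (d (2 * m))
  = (INR (binom (2 * m + 2) (m + 1)) - catalan m) / INR (binom (2 * m) m).
Proof.
  rewrite T_even_ratio. unfold catalan.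
  replace (binom (2 * m + 2) (m + 1)) with (central_binom (S m)) by (unfold central_binom; f_equal; lia).
  fold (central_binom m). pose proof (central_binomR_succ m) as Hs.
  pose proof (central_binomR_pos m). pose proof (pos_INR m). unfold central_binomR in *.
  replace (INR (central_binom (S m)))
    with (2 * (2 * INR m + 1) * INR (central_binom m) / (INR m + 1)) by (rewrite <- Hs; field; lra).
  field. lra.
Qed.

Lemma T_odd_ratio m :
  INR (T (2 * m + 1)) / INR (d (2 * m + 1)) = 4 * (INR m + 1) / (INR m + 2).
Proof.
  pose proof (T_odd_central m) as H. nat_eq_to_R H.
  rewrite d_odd. pose proof (lt_0_INR _ (binom_pos (2 * m + 1) m ltac:(lia))).
  pose proof (pos_INR m).
  apply Rdiv_eq_cross; lra.
Qed.

Lemma is_lim_seq_4_minus c k : is_lim_seq (fun n => 4 - c / (INR n + INR (S k))) 4.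
Proof.
  assert (Hinv : is_lim_seq (fun n => / INR n) 0).
  { replace (Finite 0) with (Rbar_inv p_infty) by reflexivity.
    apply is_lim_seq_inv; [apply is_lim_seq_INR|discriminate]. }
  apply (is_lim_seq_incr_n _ (S k)) in Hinv.
  pose proof (is_lim_seq_plus' _ _ 4 (- c * 0) (is_lim_seq_const 4)
                (is_lim_seq_scal_l _ (- c) _ Hinv)) as H.
  replace (4 + - c * 0) with 4 in H by ring.
  eapply is_lim_seq_ext; [|exact H]. intro n. cbv beta. rewrite plus_INR. unfold Rdiv. ring.
Qed.

Lemma T_even_ratio_lim : is_lim_seq (fun m => INR (T (2 * m)) / INR (d (2 * m))) 4.
Proof.
  eapply is_lim_seq_ext; [|apply (is_lim_seq_4_minus 3 0)]. intro n.
  rewrite T_even_ratio. simpl. pose proof (pos_INR n). field. lra.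
Qed.

Lemma T_odd_ratio_lim : is_lim_seq (fun m => INR (T (2 * m + 1)) / INR (d (2 * m + 1))) 4.
Proof.
  eapply is_lim_seq_ext; [|apply (is_lim_seq_4_minus 4 1)]. intro n.
  rewrite T_odd_ratio. simpl. pose proof (pos_INR n). field. lra.
Qed.

(** * The generating function of the central binomial coefficients *)

Lemma central_binomR_ratio n :
  central_binomR (S n) / central_binomR n = 4 - 2 / (INR n + INR 1).
Proof.
  pose proof (central_binomR_succ n). pose proof (central_binomR_pos n). pose proof (pos_INR n).
  simpl INR. apply (Rmult_eq_reg_l (INR n + 1)); [|lra].
  unfold Rdiv. rewrite <- Rmult_assoc, H. field. lra.
Qed.

Lemma CV_radius_central_binomR : CV_radius central_binomR = Finite (/ 4).
Proof.
  rewrite (CV_radius_finite_DAlembert _ 4); [reflexivity| |lra|].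
  - intro n. pose proof (central_binomR_pos n). lra.
  - eapply is_lim_seq_ext; [|apply (is_lim_seq_4_minus 2 0)]. intro n.
    pose proof (central_binomR_pos n). pose proof (central_binomR_pos (S n)).
    rewrite Rabs_pos_eq, central_binomR_ratio; [reflexivity|].
    apply Rlt_le, Rdiv_lt_0_compat; assumption.
Qed.

Lemma central_binomR_in_disk z : Rabs z < / 4 -> Rbar_lt (Rabs z) (CV_radius central_binomR).
Proof. rewrite CV_radius_central_binomR. auto. Qed.

(* The recursion [(n+1) c_(n+1) = 2 (2n+1) c_n] is the differential equation
   [(1 - 4z) f' = 2 f] for the sum [f] of the series. *)
Lemma central_binomR_ode z : Rabs z < / 4 ->
  (1 - 4 * z) * PSeries (PS_derive central_binomR) z = 2 * PSeries central_binomR z.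
Proof.
  intro Hz. pose proof (ex_pseries_derive _ z (central_binomR_in_disk z Hz)) as ED.
  rewrite Rmult_minus_distr_r, Rmult_1_l, Rmult_assoc, <- PSeries_incr_1, <- PSeries_scal.
  rewrite <- PSeries_minus.
  2: exact ED.
  2: { apply ex_pseries_scal; [apply Rmult_comm|]. apply ex_pseries_incr_1. exact ED. }
  rewrite <- PSeries_scal. apply PSeries_ext. intro n.
  unfold PS_minus, PS_scal, PS_incr_1, PS_derive, plus, opp, scal, mult; cbn -[INR].
  destruct n as [|n].
  - unfold zero, central_binomR, central_binom. simpl. lra.
  - pose proof (central_binomR_succ (S n)). rewrite !S_INR in *. lra.
Qed.

(* [f(z) sqrt(1 - 4z)] has derivative zero, hence equals its value [1] at [0]. *)
Lemma central_binomR_gf y : Rabs y < / 4 -> PSeries central_binomR y = Bgf y.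
Proof.
  intro Hy.
  set (g z := PSeries central_binomR z * sqrt (1 - 4 * z)).
  assert (Hg : forall z, Rabs z < / 4 -> is_derive g z 0).
  { intros z Hz. pose proof (Rabs_def2 _ _ Hz) as [Hz1 Hz2].
    assert (Hp : 0 < 1 - 4 * z) by lra.
    assert (Hd : is_derive (fun z => sqrt (1 - 4 * z)) z (-4 / (2 * sqrt (1 - 4 * z)))).
    { auto_derive; [lra|]. unfold Rminus, Rdiv. ring. }
    pose proof (is_derive_mult _ _ _ _ _ (is_derive_PSeries _ z (central_binomR_in_disk z Hz)) Hd ltac:(intros; apply Rmult_comm)) as D.
    unfold g.
    replace 0 with (plus (mult (PSeries (PS_derive central_binomR) z) (sqrt (1 - 4 * z)))
      (mult (PSeries central_binomR z) (-4 / (2 * sqrt (1 - 4 * z))))); [exact D|].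
    unfold plus, mult; simpl. pose proof (central_binomR_ode z Hz) as O.
    pose proof (sqrt_lt_R0 _ Hp). pose proof (sqrt_sqrt _ (Rlt_le _ _ Hp)) as Ss.
    set (s := sqrt (1 - 4 * z)) in *.
    replace (PSeries (PS_derive central_binomR) z * s + PSeries central_binomR z * (-4 / (2 * s)))
      with ((PSeries (PS_derive central_binomR) z * (s * s) - 2 * PSeries central_binomR z) / s)
      by (field; lra).
    rewrite Ss, (Rmult_comm (PSeries _ z)), O. field. lra. }
  pose proof (Rabs_def2 _ _ Hy) as [Hy1 Hy2].
  assert (Hin : forall x, Rmin 0 y <= x <= Rmax 0 y -> Rabs x < / 4).
  { intros x Hx. apply Rabs_def1; unfold Rmin, Rmax in Hx; destruct (Rle_dec 0 y); lra. }
  destruct (MVT_gen g 0 y (fun _ => 0)) as [c [_ Hc]].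
  - intros x Hx. apply Hg, Hin. lra.
  - intros x Hx. apply continuity_pt_filterlim, (ex_derive_continuous g x).
    exists 0. apply Hg, Hin, Hx.
  - unfold g in Hc. rewrite PSeries_0, Rmult_0_r, Rminus_0_r, sqrt_1 in Hc.
    assert (Hp : 0 < 1 - 4 * y) by lra. pose proof (sqrt_lt_R0 _ Hp).
    change (central_binomR 0) with 1 in Hc. unfold Bgf.
    apply (Rmult_eq_reg_r (sqrt (1 - 4 * y))); [|lra]. field_simplify; lra.
Qed.

Lemma is_series_central_binomR y : Rabs y < / 4 ->
  is_series (fun n => central_binomR n * y ^ n) (Bgf y).
Proof.
  intro Hy. rewrite <- central_binomR_gf by exact Hy. apply is_pseries_R, PSeries_correct.
  apply CV_radius_inside, central_binomR_in_disk, Hy.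
Qed.

Lemma is_series_shift (a : nat -> R) (y l : R) : y <> 0 ->
  is_series (fun n => a n * y ^ n) l -> is_series (fun n => a (S n) * y ^ n) (/ y * (l - a O)).
Proof.
  intros Hy H.
  assert (E : l = l - a O + a O * y ^ 0) by (simpl; ring).
  rewrite E in H. apply (is_series_incr_1 (fun n => a n * y ^ n) (l - a O)),
    (is_series_scal (/ y)) in H.
  eapply is_series_ext; [|exact H]. intro n. unfold scal. simpl. unfold mult. simpl. field. exact Hy.
Qed.

Lemma is_lim_seq_even_odd (s : nat -> R) (L : R) :
  is_lim_seq (fun m => s (2 * m)%nat) L -> is_lim_seq (fun m => s (2 * m + 1)%nat) L ->
  is_lim_seq s L.
Proof.
  intros H1 H2. apply is_lim_seq_spec in H1, H2. apply is_lim_seq_spec. intro eps.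
  destruct (H1 eps) as [N1 HN1], (H2 eps) as [N2 HN2].
  exists (2 * N1 + 2 * N2 + 1)%nat. intros n Hn.
  destruct (Nat.Even_or_Odd n) as [[k ->]|[k ->]]; [apply HN1|apply HN2]; lia.
Qed.

Lemma sum_n_even_odd (u : nat -> R) m :
  sum_n u (2 * m + 1) = sum_n (fun k => u (2 * k)%nat + u (2 * k + 1)%nat) m.
Proof.
  induction m as [|m IH].
  - simpl. rewrite sum_Sn, !sum_O. reflexivity.
  - replace (2 * S m + 1)%nat with (S (S (2 * m + 1))) by lia.
    rewrite !sum_Sn, IH. unfold plus. simpl. rewrite Rplus_assoc.
    do 2 f_equal; f_equal; lia.
Qed.

Lemma is_series_even_odd (u : nat -> R) E O :
  is_series (fun m => u (2 * m)%nat) E -> is_series (fun m => u (2 * m + 1)%nat) O ->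
  is_series u (E + O).
Proof.
  intros HE HO.
  pose proof (is_series_plus _ _ _ _ HE HO) as HS.
  assert (Hodd : is_lim_seq (fun m => u (2 * m + 1)%nat) 0).
  { apply ex_series_lim_0. exists O. exact HO. }
  apply (is_lim_seq_even_odd (sum_n u)).
  - replace (E + O) with ((E + O) - 0) by ring.
    apply (is_lim_seq_ext (fun m => sum_n (fun k => u (2 * k)%nat + u (2 * k + 1)%nat) m
                                   - u (2 * m + 1)%nat)).
    + intro m. rewrite <- sum_n_even_odd. replace (2 * m + 1)%nat with (S (2 * m)) by lia.
      rewrite sum_Sn. unfold plus. simpl. ring.
    + apply is_lim_seq_minus'; [exact HS|exact Hodd].
  - eapply is_lim_seq_ext; [|exact HS]. intro m. rewrite sum_n_even_odd. reflexivity.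
Qed.

Lemma square_lt_quarter x : Rabs x < 1 / 2 -> Rabs (x ^ 2) < / 4.
Proof. intro Hx. rewrite <- RPow_abs. pose proof (Rabs_pos x). simpl. nra. Qed.

Lemma T_even_series x : x <> 0 -> Rabs x < 1 / 2 ->
  is_series (fun m => INR (T (2 * m)) * x ^ (2 * m))
    (3 / 2 * (/ x ^ 2 * (Bgf (x ^ 2) - 1)) - 2 * Bgf (x ^ 2)).
Proof.
  intros Hx Hx2. set (y := x ^ 2).
  assert (Hy : Rabs y < / 4) by apply square_lt_quarter, Hx2.
  assert (Hy0 : y <> 0) by apply pow_nonzero, Hx.
  pose proof (is_series_central_binomR y Hy) as B0.
  pose proof (is_series_shift _ _ _ Hy0 B0) as B1.
  pose proof (is_series_plus _ _ _ _ (is_series_scal (3 / 2) _ _ B1)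
                (is_series_scal (- 2) _ _ B0)) as H.
  replace (central_binomR 0) with 1 in H by reflexivity.
  unfold plus, scal in H. simpl in H. unfold mult in H. simpl in H.
  replace (3 / 2 * (/ y * (Bgf y - 1)) - 2 * Bgf y)
    with (3 / 2 * (/ y * (Bgf y - 1)) + - 2 * Bgf y) by ring.
  eapply is_series_ext; [|exact H]. intro m.
  pose proof (T_even_coeff m) as E. nat_eq_to_R E.
  rewrite pow_mult. fold y. unfold central_binomR.
  replace (INR (T (2 * m))) with (3 / 2 * INR (central_binom (S m)) - 2 * INR (central_binom m))
    by lra.
  lra.
Qed.

Lemma T_odd_series x : x <> 0 -> Rabs x < 1 / 2 ->
  is_series (fun m => INR (T (2 * m + 1)) * x ^ (2 * m + 1))
    (x * (/ x ^ 2 * (/ x ^ 2 * (Bgf (x ^ 2) - 1) - 2) - 2 * (/ x ^ 2 * (Bgf (x ^ 2) - 1)))).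
Proof.
  intros Hx Hx2. set (y := x ^ 2).
  assert (Hy : Rabs y < / 4) by apply square_lt_quarter, Hx2.
  assert (Hy0 : y <> 0) by apply pow_nonzero, Hx.
  pose proof (is_series_shift _ _ _ Hy0 (is_series_central_binomR y Hy)) as B1.
  pose proof (is_series_shift _ _ _ Hy0 B1) as B2.
  pose proof (is_series_scal x _ _ (is_series_plus _ _ _ _ B2 (is_series_scal (- 2) _ _ B1))) as H.
  replace (central_binomR 0) with 1 in H by reflexivity.
  replace (central_binomR 1) with 2 in H by (unfold central_binomR; simpl; lra).
  unfold plus, scal in H. simpl in H. unfold mult in H. simpl in H.
  replace (x * (/ y * (/ y * (Bgf y - 1) - 2) - 2 * (/ y * (Bgf y - 1))))
    with (x * (/ y * (/ y * (Bgf y - 1) - 2) + - 2 * (/ y * (Bgf y - 1)))) by ring.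
  eapply is_series_ext; [|exact H]. intro m.
  pose proof (T_odd_coeff m) as E. nat_eq_to_R E.
  rewrite pow_add, pow_mult, pow_1. fold y. unfold central_binomR.
  replace (INR (T (2 * m + 1)))
    with (INR (central_binom (S (S m))) - 2 * INR (central_binom (S m))) by lra.
  lra.
Qed.

Lemma Bgf_mul_sqrt y : y < / 4 -> Bgf y * sqrt (1 - 4 * y) = 1.
Proof.
  intro Hy. unfold Bgf. field. apply Rgt_not_eq, sqrt_lt_R0. lra.
Qed.

Lemma Cgf_mul_2y y : y <> 0 -> 2 * y * Cgf y = 1 - sqrt (1 - 4 * y).
Proof. intro Hy. unfold Cgf. field. exact Hy. Qed.

(* Both identities become rational identities in [s = sqrt (1 - 4y)] once [y]
   is replaced by [(1 - s^2) / 4]. *)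
Lemma even_gf_closed y : y <> 0 -> y < / 4 ->
  3 / 2 * (/ y * (Bgf y - 1)) - 2 * Bgf y = Cgf y * (2 * Bgf y - 1).
Proof.
  intros Hy0 Hy. unfold Cgf, Bgf.
  assert (Hs : 0 < sqrt (1 - 4 * y)) by (apply sqrt_lt_R0; lra).
  assert (Hss : sqrt (1 - 4 * y) * sqrt (1 - 4 * y) = 1 - 4 * y) by (apply sqrt_sqrt; lra).
  set (s := sqrt (1 - 4 * y)) in *. replace y with ((1 - s * s) / 4) by lra.
  field. split; [lra|]. intro. apply Hy0. lra.
Qed.

Lemma odd_gf_closed x y : y <> 0 -> y < / 4 ->
  x * (/ y * (/ y * (Bgf y - 1) - 2) - 2 * (/ y * (Bgf y - 1))) = 2 * x * Bgf y * Cgf y ^ 2.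
Proof.
  intros Hy0 Hy. unfold Cgf, Bgf.
  assert (Hs : 0 < sqrt (1 - 4 * y)) by (apply sqrt_lt_R0; lra).
  assert (Hss : sqrt (1 - 4 * y) * sqrt (1 - 4 * y) = 1 - 4 * y) by (apply sqrt_sqrt; lra).
  set (s := sqrt (1 - 4 * y)) in *. replace y with ((1 - s * s) / 4) by lra.
  field. split; [lra|]. intro. apply Hy0. lra.
Qed.

Lemma square_in_range x : x <> 0 -> Rabs x < 1 / 2 -> x ^ 2 <> 0 /\ x ^ 2 < / 4.
Proof.
  intros Hx Hx2. split; [apply pow_nonzero, Hx|].
  exact (proj1 (Rabs_def2 _ _ (square_lt_quarter x Hx2))).
Qed.

Lemma T_even_gf x : x <> 0 -> Rabs x < 1 / 2 ->
  is_series (fun m => INR (T (2 * m)) * x ^ (2 * m)) (Cgf (x ^ 2) * (2 * Bgf (x ^ 2) - 1)).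
Proof.
  intros Hx Hx2. destruct (square_in_range x Hx Hx2) as [Hy0 Hy].
  rewrite <- even_gf_closed by assumption. apply T_even_series; assumption.
Qed.

Lemma T_odd_gf x : x <> 0 -> Rabs x < 1 / 2 ->
  is_series (fun m => INR (T (2 * m + 1)) * x ^ (2 * m + 1))
    (2 * x * Bgf (x ^ 2) * Cgf (x ^ 2) ^ 2).
Proof.
  intros Hx Hx2. destruct (square_in_range x Hx Hx2) as [Hy0 Hy].
  rewrite <- odd_gf_closed by assumption. apply T_odd_series; assumption.
Qed.

Lemma full_gf_closed x : x <> 0 -> Rabs x < 1 / 2 ->
  Cgf (x ^ 2) * (2 * Bgf (x ^ 2) - 1) + 2 * x * Bgf (x ^ 2) * Cgf (x ^ 2) ^ 2
  = 2 * Cgf (x ^ 2) * (1 / (2 * x) * (sqrt ((1 + 2 * x) / (1 - 2 * x)) - 1)) - Cgf (x ^ 2).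
Proof.
  intros Hx Hx2. destruct (square_in_range x Hx Hx2) as [Hy0 Hy].
  pose proof (Rabs_def2 _ _ Hx2) as [Hx2p Hx2m].
  pose proof (Bgf_mul_sqrt _ Hy) as HB. pose proof (Cgf_mul_2y _ Hy0) as HC.
  set (s := sqrt (1 - 4 * x ^ 2)) in *. set (B := Bgf (x ^ 2)) in *. set (C := Cgf (x ^ 2)) in *.
  assert (Hsq : sqrt ((1 + 2 * x) / (1 - 2 * x)) = (1 + 2 * x) * B).
  { assert (Hs : 0 < s) by (apply sqrt_lt_R0; lra).
    assert (Hss : s * s = 1 - 4 * x ^ 2) by (apply sqrt_sqrt; lra).
    assert (HBs : B = / s) by (apply (Rmult_eq_reg_r s); [rewrite HB; field|]; lra).
    rewrite HBs, <- (sqrt_pow2 ((1 + 2 * x) * / s))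
      by (apply Rmult_le_pos; [lra|apply Rlt_le, Rinv_0_lt_compat, Hs]).
    f_equal. replace (((1 + 2 * x) * / s) ^ 2) with ((1 + 2 * x) ^ 2 / (s * s)) by (field; lra).
    rewrite Hss. field. split; [lra|]. simpl. nra. }
  (* [2 x^2 B C^2 = B C (1 - s) = B C - C] *)
  assert (HBC : 2 * x * B * C ^ 2 = (C * B - C) / x).
  { apply (Rmult_eq_reg_l x); [|exact Hx].
    replace (x * (2 * x * B * C ^ 2)) with (B * C * (2 * x ^ 2 * C)) by ring.
    replace (x * ((C * B - C) / x)) with (C * B - C) by (field; exact Hx).
    rewrite HC. transitivity (B * C - C * (B * s)); [ring|rewrite HB; ring]. }
  rewrite Hsq, HBC. field. exact Hx.
Qed.

Lemma T_gf x : x <> 0 -> Rabs x < 1 / 2 ->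
  is_series (fun n => INR (T n) * x ^ n)
    (2 * Cgf (x ^ 2) * (1 / (2 * x) * (sqrt ((1 + 2 * x) / (1 - 2 * x)) - 1)) - Cgf (x ^ 2)).
Proof.
  intros Hx Hx2. rewrite <- full_gf_closed by assumption.
  exact (is_series_even_odd (fun n => INR (T n) * x ^ n) _ _ (T_even_gf x Hx Hx2) (T_odd_gf x Hx Hx2)).
Qed.

Theorem theorem4p5 :
  (* the full generating function, as a convergent power series on 0<|x|<1/2 *)
  (forall x : R, x <> 0 -> Rabs x < 1 / 2 ->
     is_series (fun n => INR (T n) * x ^ n)
       (2 * Cgf (x ^ 2) * (1 / (2 * x) * (sqrt ((1 + 2 * x) / (1 - 2 * x)) - 1))
        - Cgf (x ^ 2))) /\
  (* its first coefficients *)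
  (T 0 = 1 /\ T 1 = 2 /\ T 2 = 5 /\ T 3 = 8 /\ T 4 = 18 /\ T 5 = 30 /\
   T 6 = 65 /\ T 7 = 112)%nat /\
  (* even part *)
  (forall x : R, x <> 0 -> Rabs x < 1 / 2 ->
     is_series (fun m => INR (T (2 * m)) * x ^ (2 * m))
       (Cgf (x ^ 2) * (2 * Bgf (x ^ 2) - 1))) /\
  (forall m : nat,
     INR (T (2 * m)) / INR (d (2 * m))
       = (INR (binom (2 * m + 2) (m + 1)) - catalan m) / INR (binom (2 * m) m) /\
     INR (T (2 * m)) / INR (d (2 * m)) = (4 * INR m + 1) / (INR m + 1)) /\
  is_lim_seq (fun m => INR (T (2 * m)) / INR (d (2 * m))) 4 /\
  (* odd part *)
  (forall x : R, x <> 0 -> Rabs x < 1 / 2 ->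
     is_series (fun m => INR (T (2 * m + 1)) * x ^ (2 * m + 1))
       (2 * x * Bgf (x ^ 2) * Cgf (x ^ 2) ^ 2)) /\
  (forall m : nat,
     INR (T (2 * m + 1)) / INR (d (2 * m + 1))
       = 2 * INR (binom (2 * m + 2) m) / INR (binom (2 * m + 1) m) /\
     INR (T (2 * m + 1)) / INR (d (2 * m + 1)) = 4 * (INR m + 1) / (INR m + 2)) /\
  is_lim_seq (fun m => INR (T (2 * m + 1)) / INR (d (2 * m + 1))) 4.
Proof.
  split; [exact T_gf|].
  split; [exact T_first_values|].
  split; [exact T_even_gf|].
  split; [intro m; split; [apply T_even_ratio_binom|apply T_even_ratio]|].
  split; [exact T_even_ratio_lim|].
  split; [exact T_odd_gf|].
  split.
  - intro m. split; [|apply T_odd_ratio].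
    rewrite T_odd, d_odd, mult_INR. reflexivity.
  - exact T_odd_ratio_lim.
Qed.
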